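(* Let $\mathcal{D}$ be a domain with $\mathcal{SP}\subseteq\mathcal{D}\subseteq\mathcal{U}$ and let $\varphi$ be an own-peak-only rule on $\mathcal{E}_{\mathcal{D}}$ that satisfies the equal division guarantee and not obvious manipulability (NOM). Let $i\in N$ and $(R,\Omega)\in\mathcal{E}_{\mathcal{D}}$. If $p(R_i)$ is a singleton, then $\varphi_i(R,\Omega)$ lies in the closed interval between $p(R_i)$ and $\frac{\Omega}{n}$.
   Context: Let $N=\{1,\dots,n\}$ be a finite set of agents. $\mathcal{U}$ is the set of continuous complete preorders $R_i$ on $\mathbb{R}_+\cup\{\infty\}$ ($P_i$ strict, $I_i$ indifference), with peak $p(R_i)=\{x:xR_iy\ \forall y\}$ (identified with its element when a singleton). $R_i$ is single-peaked if $p(R_i)$ is a singleton and for $x,x'\in\mathbb{R}_+$, $xP_ix'$ whenever $x'<x\le p(R_i)$ or $p(R_i)\le x<x'$; $\mathcal{SP}$ is the set of these. For $\mathcal{D}\subseteq\mathcal{U}$, an economy is $(R,\Omega)$ with $R\in\mathcal{D}^n$, $\Omega>0$; $\mathcal{E}_{\mathcal{D}}$ is the set of economies; a rule is a map $\varphi:\mathcal{E}_{\mathcal{D}}\to\mathbb{R}^n_+$ with $\sum_j\varphi_j(R,\Omega)=\Omega$. Own-peak-only: for $R_i'\in\mathcal{D}$ with $p(R_i')=p(R_i)$, $\varphi_i(R,\Omega)=\varphi_i(R_i',R_{-i},\Omega)$. Equal division guarantee: $\Omega/n\in p(R_i)$ implies $\varphi_i(R,\Omega)I_i\Omega/n$.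 Option set $O^\varphi(R_i,\Omega)=\{\varphi_i(R_i,R_{-i},\Omega):R_{-i}\in\mathcal{D}^{n-1}\}$; $R_i'\in\mathcal{D}$ is a manipulation at $(R_i,\Omega)$ if $\varphi_i(R_i',R_{-i},\Omega)P_i\varphi_i(R_i,R_{-i},\Omega)$ for some $R_{-i}$, an obvious manipulation if moreover each $x'\in O^\varphi(R_i',\Omega)$ satisfies $x'P_ix$ for some $x\in O^\varphi(R_i,\Omega)$; NOM means no obvious manipulation exists. *)

From Stdlib Require Import Reals.
From mathcomp Require Import ssreflect ssrfun ssrbool eqtype ssrnat seq fintype bigop.

Set Implicit Arguments.
Unset Strict Implicit.

Local Open Scope R_scope.

(* R_+ \cup {infinity}: Some r (r >= 0) is a finite amount, None is infinity. *)
Definition ext := option R.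

Definition valid (x : ext) : Prop :=
  match x with Some r => 0 <= r | None => True end.

Definition ext_le (x y : ext) : Prop :=
  match x, y with
  | Some a, Some b => a <= b
  | _, None => True
  | None, Some _ => False
  end.

Definition ext_lt (x y : ext) : Prop := ext_le x y /\ x <> y.

Definition ext_conv (u : nat -> ext) (l : ext) : Prop :=
  match l with
  | Some r => forall eps, 0 < eps -> exists N, forall k, (N <= k)%nat ->
                exists a, u k = Some a /\ Rabs (a - r) < eps
  | None => forall M, exists N, forall k, (N <= k)%nat ->
                match u k with Some a => M < a | None => True end
  end.

(* closed subset of [0,infinity] (sequential closedness; [0,infinity] is metrizable) *)
Definition ext_closed (S : ext -> Prop) : Prop :=
  forall (u : nat -> ext) (l : ext),
    (forall k, valid (u k) /\ S (u k)) -> ext_conv u l -> S l.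

(* a preference relation R_i : "x R_i y" = x is at least as good as y *)
Definition pref := ext -> ext -> Prop.

Definition strict (Ri : pref) (x y : ext) : Prop := Ri x y /\ ~ Ri y x.
Definition indiff (Ri : pref) (x y : ext) : Prop := Ri x y /\ Ri y x.

Definition complete_preorder (Ri : pref) : Prop :=
  (forall x, valid x -> Ri x x) /\
  (forall x y z, valid x -> valid y -> valid z -> Ri x y -> Ri y z -> Ri x z) /\
  (forall x y, valid x -> valid y -> Ri x y \/ Ri y x).

Definition pref_continuous (Ri : pref) : Prop :=
  forall y, valid y ->
    ext_closed (fun x => Ri x y) /\ ext_closed (fun x => Ri y x).

Definition in_U (Ri : pref) : Prop := complete_preorder Ri /\ pref_continuous Ri.

Definition peak (Ri : pref) (x : ext) : Prop :=
  valid x /\ forall y, valid y -> Ri x y.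

Definition peak_singleton (Ri : pref) (p : ext) : Prop :=
  forall x, peak Ri x <-> x = p.

Definition in_SP (Ri : pref) : Prop :=
  in_U Ri /\ exists p, peak_singleton Ri p /\
    forall x x' : R, 0 <= x -> 0 <= x' ->
      ((x' < x /\ ext_le (Some x) p) \/ (ext_le p (Some x) /\ x < x')) ->
      strict Ri (Some x) (Some x').

Definition domain := pref -> Prop.

Definition profile (n : nat) := 'I_n -> pref.

Definition in_Dn (D : domain) n (Rp : profile n) : Prop := forall j, D (Rp j).

Definition upd n (Rp : profile n) (i : 'I_n) (Ri : pref) : profile n :=
  fun j => if j == i then Ri else Rp j.

Definition rule_fn (n : nat) := profile n -> R -> 'I_n -> R.

Definition is_rule (D : domain) n (phi : rule_fn n) : Prop :=
  forall (Rp : profile n) (Om : R), in_Dn D Rp -> 0 < Om ->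
    (forall j, 0 <= phi Rp Om j) /\ \big[Rplus/0]_(j < n) phi Rp Om j = Om.

Definition own_peak_only (D : domain) n (phi : rule_fn n) : Prop :=
  forall (Rp : profile n) (Om : R) (i : 'I_n) (Ri' : pref),
    in_Dn D Rp -> 0 < Om -> D Ri' ->
    (forall x, peak Ri' x <-> peak (Rp i) x) ->
    phi Rp Om i = phi (upd Rp i Ri') Om i.

Definition equal_division_guarantee (D : domain) n (phi : rule_fn n) : Prop :=
  forall (Rp : profile n) (Om : R) (i : 'I_n),
    in_Dn D Rp -> 0 < Om ->
    peak (Rp i) (Some (Om / INR n)) ->
    indiff (Rp i) (Some (phi Rp Om i)) (Some (Om / INR n)).

Definition option_set (D : domain) n (phi : rule_fn n) (i : 'I_n) (Ri : pref) (Om : R)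
  (x : R) : Prop :=
  exists Rp' : profile n, in_Dn D Rp' /\ phi (upd Rp' i Ri) Om i = x.

Definition manipulation (D : domain) n (phi : rule_fn n) (i : 'I_n) (Ri Ri' : pref)
  (Om : R) : Prop :=
  D Ri' /\ exists Rp' : profile n, in_Dn D Rp' /\
    strict Ri (Some (phi (upd Rp' i Ri') Om i)) (Some (phi (upd Rp' i Ri) Om i)).

Definition obvious_manipulation (D : domain) n (phi : rule_fn n) (i : 'I_n)
  (Ri Ri' : pref) (Om : R) : Prop :=
  manipulation D phi i Ri Ri' Om /\
  forall x', option_set D phi i Ri' Om x' ->
    exists x, option_set D phi i Ri Om x /\ strict Ri (Some x') (Some x).

Definition NOM (D : domain) n (phi : rule_fn n) : Prop :=
  forall (i : 'I_n) (Ri Ri' : pref) (Om : R),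
    D Ri -> 0 < Om -> ~ obvious_manipulation D phi i Ri Ri' Om.

Definition ext_between (a b c : ext) : Prop :=
  (ext_le a c /\ ext_le c b) \/ (ext_le b c /\ ext_le c a).

From Stdlib Require Import Reals Lra Psatz Classical.
From mathcomp Require Import ssreflect ssrfun ssrbool eqtype ssrnat seq fintype bigop.

Set Implicit Arguments.
Unset Strict Implicit.

Local Open Scope R_scope.

(* Suppose x := phi_i(R, Omega) lies outside the interval between the peak p of R_i
   and m := Omega/n. Then there is a single-peaked R_i' with the same peak p that
   strictly prefers m to x: a tent with a steep enough side facing x. By own-peak-only,
   reporting R_i' still yields x. A single-peaked preference with peak m always yields
   exactly m by the equal division guarantee, so its option set is {m}; reporting it is
   then an obvious manipulation at R_i', contradicting NOM.
   Peaks may be infinite, so the tents are built on [0, infinity] squashed onto [0, 1]. *)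

Definition squash (u : ext) : R :=
  match u with Some y => y / (1 + y) | None => 1 end.
Arguments squash : simpl never.

Lemma squash_None : squash None = 1.
Proof. by []. Qed.

Lemma squash_Some y : 0 <= y -> squash (Some y) = 1 - / (1 + y).
Proof. by move=> hy; rewrite /squash; field; lra. Qed.

Lemma squash_lt y z : 0 <= y -> y < z -> squash (Some y) < squash (Some z).
Proof.
move=> hy hyz; rewrite !squash_Some; try lra.
by have := Rinv_lt_contravar (1 + y) (1 + z) ltac:(nra) ltac:(lra); lra.
Qed.

Lemma squash_lt1 y : 0 <= y -> squash (Some y) < 1.
Proof. by move=> hy; rewrite squash_Some //; have := Rinv_0_lt_compat (1 + y); lra. Qed.

Lemma squash_le_iff u v : valid u -> valid v -> ext_le u v <-> squash u <= squash v.
Proof.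
case: u => [y|]; case: v => [z|] //= hy hz; rewrite ?squash_None.
- split=> h.
  + by case: (Rle_lt_or_eq_dec _ _ h) => [/(squash_lt hy) /Rlt_le | ->]; [|lra].
  + by apply: Rnot_lt_le => /(squash_lt hz); lra.
- by have := squash_lt1 hy; split=> _; lra.
- by have := squash_lt1 hz; split=> //; lra.
- by split=> _; lra.
Qed.

Lemma squash_inj u v : valid u -> valid v -> squash u = squash v -> u = v.
Proof.
move=> hu hv e.
have := proj2 (squash_le_iff hu hv) (Req_le _ _ e).
have := proj2 (squash_le_iff hv hu) (Req_le _ _ (esym e)).
by case: u {hu e} => [y|]; case: v {hv} => [z|] //= h1 h2; rewrite (Rle_antisym _ _ h2 h1).
Qed.

Lemma squash_lipschitz y z : 0 <= y -> 0 <= z ->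
  Rabs (squash (Some y) - squash (Some z)) <= Rabs (y - z).
Proof.
move=> hy hz; rewrite !squash_Some //.
have -> : 1 - / (1 + y) - (1 - / (1 + z)) = (y - z) * / ((1 + y) * (1 + z)) by field; lra.
rewrite Rabs_mult (Rabs_right (/ _)); last by apply/Rle_ge/Rlt_le; apply: Rinv_0_lt_compat; nra.
have := Rinv_le_contravar 1 ((1 + y) * (1 + z)) Rlt_0_1 ltac:(nra); rewrite Rinv_1.
have := Rinv_0_lt_compat ((1 + y) * (1 + z)) ltac:(nra).
have := Rabs_pos (y - z); nra.
Qed.

Lemma ext_conv_limit_valid (s : nat -> ext) l :
  (forall k, valid (s k)) -> ext_conv s l -> valid l.
Proof.
case: l => [r|] //= hv hc; apply: Rnot_lt_le => hr.
have [N hN] := hc (- r) ltac:(lra).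
have [a [ea ha]] := hN N (leqnn N).
by move: (hv N); rewrite ea /= => ha0; move: ha; rewrite Rabs_right; lra.
Qed.

Definition ext_continuous (f : ext -> R) : Prop :=
  forall s l, (forall k, valid (s k)) -> ext_conv s l -> Un_cv (fun k => f (s k)) (f l).

Lemma squash_continuous : ext_continuous squash.
Proof.
move=> s l hv hc; have hl := ext_conv_limit_valid hv hc.
case: l hc hl => [r|] /= hc hr eps he.
- have [N hN] := hc eps he; exists N => k /leP hk.
  have [a [ea ha]] := hN k hk; rewrite ea.
  have ha0 : 0 <= a by move: (hv k); rewrite ea.
  by have := squash_lipschitz ha0 hr; rewrite /R_dist /=; lra.
- have [N hN] := hc (/ eps); exists N => k /leP hk.
  move: (hN k hk) (hv k); rewrite /R_dist.
  case: (s k) => [a|] /= hM ha; last by rewrite Rminus_diag Rabs_R0.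
  have -> : a / (1 + a) - 1 = - / (1 + a) by field; lra.
  rewrite Rabs_Ropp Rabs_right; last by apply/Rle_ge/Rlt_le; apply: Rinv_0_lt_compat; lra.
  rewrite -(Rinv_inv eps); apply: Rinv_lt_contravar; last by lra.
  by have := Rinv_0_lt_compat _ he; nra.
Qed.

Lemma Un_cv_lipschitz (f : R -> R) K v t : 0 <= K ->
  (forall x y, Rabs (f x - f y) <= K * Rabs (x - y)) ->
  Un_cv v t -> Un_cv (fun k => f (v k)) (f t).
Proof.
move=> hK hf hv eps he.
have [N hN] := hv (eps / (K + 1)) ltac:(apply: Rdiv_lt_0_compat; lra).
exists N => k hk; move: (hN k hk); rewrite /R_dist => hd.
have e : eps / (K + 1) * (K + 1) = eps by field; lra.
have := hf (v k) t; have := Rabs_pos (v k - t); nra.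
Qed.

Lemma Un_cv_lb c v l : (forall k, c <= v k) -> Un_cv v l -> c <= l.
Proof.
move=> hc; apply: Rle_cv_lim hc _.
by move=> eps he; exists O => k _; rewrite /R_dist Rminus_diag Rabs_R0.
Qed.

Lemma Un_cv_ub c v l : (forall k, v k <= c) -> Un_cv v l -> l <= c.
Proof.
move=> hc hv; apply: Rle_cv_lim hc hv _.
by move=> eps he; exists O => k _; rewrite /R_dist Rminus_diag Rabs_R0.
Qed.

Definition pref_of (f : ext -> R) : pref := fun x y => f y <= f x.

Lemma pref_of_in_U f : ext_continuous f -> in_U (pref_of f).
Proof.
move=> hf; split.
- split; [|split]; rewrite /pref_of.
  + by move=> x _; lra.
  + by move=> x y z _ _ _; lra.
  + by move=> x y _ _; lra.
- move=> y _; split=> s l hs /(hf s l (fun k => proj1 (hs k))); rewrite /pref_of.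
  + exact: Un_cv_lb (fun k => proj2 (hs k)).
  + exact: Un_cv_ub (fun k => proj2 (hs k)).
Qed.

Definition tent (a b c t : R) : R := Rmin (a * (t - c)) (b * (c - t)).

Section Tent.
Variables a b c : R.
Hypotheses (ha : 0 < a) (hb : 0 < b).

Lemma tent_left t : t <= c -> tent a b c t = a * (t - c).
Proof. by move=> ht; apply: Rmin_left; nra. Qed.

Lemma tent_right t : c <= t -> tent a b c t = b * (c - t).
Proof. by move=> ht; apply: Rmin_right; nra. Qed.

Lemma tent_le0 t : tent a b c t <= 0.
Proof. by case: (Rle_or_lt t c) => ht; [rewrite tent_left | rewrite tent_right]; nra. Qed.

Lemma tent_at_peak : tent a b c c = 0.
Proof. by rewrite tent_left; lra. Qed.

Lemma tent_eq0 t : tent a b c t = 0 -> t = c.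
Proof.
by case: (Rle_or_lt t c) => ht; [rewrite tent_left | rewrite tent_right]; nra.
Qed.

Lemma tent_increasing t t' : t' < t <= c -> tent a b c t' < tent a b c t.
Proof. by move=> ht; rewrite !tent_left; nra. Qed.

Lemma tent_decreasing t t' : c <= t < t' -> tent a b c t' < tent a b c t.
Proof. by move=> ht; rewrite !tent_right; nra. Qed.

Lemma tent_lipschitz t t' : Rabs (tent a b c t - tent a b c t') <= (a + b) * Rabs (t - t').
Proof.
rewrite /tent /Rmin; repeat case: Rle_dec => ?;
  rewrite /Rabs; repeat case: Rcase_abs => ?; nra.
Qed.

End Tent.

Lemma tent_reflect a b c t : tent a b c t = tent b a (- c) (- t).
Proof. by rewrite /tent Rmin_comm; f_equal; ring. Qed.

(* The slopes make the drop a (c - t) from the peak to t exceed the drop b (h - c) to h. *)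
Lemma tent_separates c h t : t < c -> t < h ->
  exists a b, [/\ 0 < a, 0 < b & tent a b c t < tent a b c h].
Proof.
move=> htc hth; exists (h - t + 1), (c - t); split; try lra.
rewrite tent_left; try lra.
case: (Rle_or_lt h c) => hhc; [rewrite tent_left | rewrite tent_right]; nra.
Qed.

Lemma tent_separates_outside c h t :
  ~ ((c <= t <= h) \/ (h <= t <= c)) ->
  exists a b, [/\ 0 < a, 0 < b & tent a b c t < tent a b c h].
Proof.
move=> hout.
case: (Rlt_or_le t c) => htc; case: (Rlt_or_le t h) => hth; try by exfalso; lra.
- exact: tent_separates.
- have [a [b [ha hb hlt]]] := @tent_separates (- c) (- h) (- t) ltac:(lra) ltac:(lra).
  by exists b, a; split=> //; rewrite !(tent_reflect b a).
Qed.

Definition tent_pref (a b : R) (p : ext) : pref :=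
  pref_of (fun u => tent a b (squash p) (squash u)).

Section TentPref.
Variables (a b : R) (p : ext).
Hypotheses (ha : 0 < a) (hb : 0 < b) (hp : valid p).

Lemma tent_pref_peak : peak_singleton (tent_pref a b p) p.
Proof.
move=> x; split=> [[hx hxp] | ->].
- apply: squash_inj => //; apply: (tent_eq0 ha hb); apply: Rle_antisym.
  + exact: tent_le0.
  + by move: (hxp p hp); rewrite /tent_pref /pref_of (tent_at_peak _ ha hb).
- by split=> // y _; rewrite /tent_pref /pref_of (tent_at_peak _ ha hb); apply: tent_le0.
Qed.

Lemma tent_pref_in_SP : in_SP (tent_pref a b p).
Proof.
split.
- apply: pref_of_in_U => s l hv hc.
  apply: (Un_cv_lipschitz (K := a + b)); first lra.
  + exact: tent_lipschitz.
  + exact: squash_continuous.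
- exists p; split; first exact: tent_pref_peak.
  move=> x x' hx hx' hside.
  suff : tent a b (squash p) (squash (Some x')) < tent a b (squash p) (squash (Some x)).
    by rewrite /strict /tent_pref /pref_of; lra.
  case: hside => [[hlt hle] | [hle hlt]].
  + apply: tent_increasing => //; split; first exact: squash_lt.
    by apply/(squash_le_iff (u := Some x)).
  + apply: tent_decreasing => //; split; last exact: squash_lt.
    by apply/(squash_le_iff (v := Some x)).
Qed.

End TentPref.

Lemma ext_between_squash u v w : valid u -> valid v -> valid w ->
  (squash u <= squash w <= squash v) \/ (squash v <= squash w <= squash u) ->
  ext_between u v w.
Proof.
by move=> hu hv hw [[h1 h2] | [h1 h2]]; [left | right];
  split; apply/squash_le_iff.
Qed.

Lemma indiff_peak_eq Ri p x : complete_preorder Ri -> peak_singleton Ri p ->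
  valid x -> indiff Ri x p -> x = p.
Proof.
move=> [_ [htrans _]] hpk hx [hxp _].
have [hp hpmax] := proj2 (hpk p) erefl.
apply/hpk; split=> // y hy.
exact: htrans hxp (hpmax y hy).
Qed.

Section Rule.
Variables (n : nat) (D : domain) (phi : rule_fn n) (i : 'I_n).

Lemma in_Dn_upd Rp Ri : in_Dn D Rp -> D Ri -> in_Dn D (upd Rp i Ri).
Proof. by move=> hRp hRi j; rewrite /upd; case: (j == i). Qed.

Lemma upd_at Rp Ri : upd Rp i Ri i = Ri.
Proof. by rewrite /upd eqxx. Qed.

Lemma equal_division_peak_share Ri Om :
  (forall Ri, D Ri -> in_U Ri) -> is_rule D phi -> equal_division_guarantee D phi ->
  D Ri -> 0 < Om -> peak_singleton Ri (Some (Om / INR n)) ->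
  forall Rp, in_Dn D Rp -> phi (upd Rp i Ri) Om i = Om / INR n.
Proof.
move=> HU Hrule Hedg hRi hOm hpk Rp hRp.
have hRp' := in_Dn_upd hRp hRi.
have := Hedg _ Om i hRp' hOm; rewrite upd_at => /(_ (proj2 (hpk _) erefl)) hind.
have hx : valid (Some (phi (upd Rp i Ri) Om i)) := proj1 (Hrule _ Om hRp' hOm) i.
by case: (indiff_peak_eq (proj1 (HU _ hRi)) hpk hx hind).
Qed.

Lemma obvious_manipulation_by_constant_option R1 R2 Rp Om m :
  D R1 -> in_Dn D Rp ->
  (forall Rp', in_Dn D Rp' -> phi (upd Rp' i R1) Om i = m) ->
  strict R2 (Some m) (Some (phi (upd Rp i R2) Om i)) ->
  obvious_manipulation D phi i R2 R1 Om.
Proof.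
move=> hR1 hRp hconst hpref; split.
- by split=> //; exists Rp; rewrite hconst.
- move=> _ [Rp' [hRp' <-]]; exists (phi (upd Rp i R2) Om i).
  by split; [exists Rp | rewrite hconst].
Qed.

End Rule.

Theorem lemma3 (n : nat) (D : domain) (phi : rule_fn n) :
  (forall Ri, in_SP Ri -> D Ri) ->
  (forall Ri, D Ri -> in_U Ri) ->
  is_rule D phi ->
  own_peak_only D phi ->
  equal_division_guarantee D phi ->
  NOM D phi ->
  forall (i : 'I_n) (Rp : profile n) (Om : R),
    in_Dn D Rp -> 0 < Om ->
    forall p : ext, peak_singleton (Rp i) p ->
      ext_between p (Some (Om / INR n)) (Some (phi Rp Om i)).
Proof.
move=> HSP HU Hrule Hopo Hedg Hnom i Rp Om HRp HOm p Hp.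
have hn : 0 < INR n by apply/lt_0_INR/ltP; exact: leq_ltn_trans (leq0n i) (ltn_ord i).
set m := Om / INR n; have hm : 0 <= m by apply/Rlt_le/Rdiv_lt_0_compat.
have hx : 0 <= phi Rp Om i := proj1 (Hrule Rp Om HRp HOm) i.
have hp : valid p := proj1 (proj2 (Hp p) erefl).
apply: ext_between_squash => //; apply: NNPP => hout.
have [a [b [ha hb hlt]]] := tent_separates_outside hout.
set Rm := tent_pref 1 1 (Some m); set Ri' := tent_pref a b p.
have peak_Rm : peak_singleton Rm (Some m) by apply: tent_pref_peak; rewrite /=; lra.
have D_Rm : D Rm by apply/HSP/tent_pref_in_SP; rewrite /=; lra.
have D_Ri' : D Ri' by apply/HSP/tent_pref_in_SP.
have same_share : phi (upd Rp i Ri') Om i = phi Rp Om i.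
  by symmetry; apply: Hopo => // y; rewrite tent_pref_peak // Hp.
apply: (Hnom i _ _ Om D_Ri' HOm).
apply: (obvious_manipulation_by_constant_option D_Rm HRp).
- exact: (equal_division_peak_share i HU Hrule Hedg D_Rm HOm peak_Rm).
- by rewrite same_share /strict /Ri' /tent_pref /pref_of -/m; lra.
Qed.
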